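(* Let $(a_m)_{m\ge1}$ be defined by $a_1=2$ and $a_{m+1}=a_m+1/a_m$. Then for every $m\ge1$ the lower bound $a_m\ge\sqrt{m+\sqrt{m(m+1)}}$ holds, and $$\frac{a_{m+1}}{a_m}\le\sqrt{\frac{m+1}{m}},$$ so the sequence $\big(a_m/\sqrt m\big)_{m\ge1}$ is non-increasing; moreover $\lim_{m\to\infty}a_m/\sqrt m=\sqrt2$.
   Context: $a_m$ is the right endpoint of the support $[-a_m,a_m]$ of the $m$-fold monotone convolution of the standard semicircle law $\frac1{2\pi}\sqrt{4-x^2}\mathbf 1_{[-2,2]}dx$. *)

From Stdlib Require Import Reals.
Open Scope R_scope.

(* a0 n = a_{n+1} in the paper's 1-based indexing *)
Fixpoint a0 (n : nat) : R :=
  match n with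
  | O => 2
  | S k => a0 k + / a0 k
  end.

(* a m = a_m for m >= 1 (a 0 is a junk value, never used) *)
Definition a (m : nat) : R := a0 (Nat.pred m).

(** Squaring the recursion gives [a_{m+1}^2 = a_m^2 + 2 + 1/a_m^2], so [a_m^2]
    grows like [2m] with a sublinear correction, which yields the limit.
    The function [lower_sq m = m + sqrt(m(m+1))] is a subsolution of the same
    recursion and [t + 1/t] is increasing on [[1, oo)], so [lower_sq m <= a_m^2]
    by induction.  The ratio bound is then the identity
    [1 + 1/lower_sq m = sqrt((m+1)/m)]. *)

From Stdlib Require Import Reals Lra Lia Psatz.
Open Scope R_scope.

Lemma Rplus_inv_self_le (x y : R) : 1 <= x -> x <= y -> x + / x <= y + / y.
Proof.
  intros Hx Hxy.
  assert (Hdiff : y + / y - (x + / x) = (y - x) * (x * y - 1) / (x * y))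
    by (field; lra).
  assert (0 <= (y - x) * (x * y - 1) / (x * y)); [|lra].
  apply Rmult_le_pos; [apply Rmult_le_pos; nra|].
  left; apply Rinv_0_lt_compat; nra.
Qed.

Lemma sqrt_succ_ge (x : R) : 0 <= x -> sqrt x + / (2 * x + 4) <= sqrt (x + 1).
Proof.
  intros Hx.
  pose proof (sqrt_pos x); pose proof (sqrt_pos (x + 1)).
  pose proof (sqrt_sqrt x Hx); pose proof (sqrt_sqrt (x + 1) ltac:(lra)).
  assert (sqrt x <= sqrt (x + 1)) by (apply sqrt_le_1; lra).
  assert (sqrt (x + 1) <= x + 2) by nra.
  assert (/ (2 * x + 4) <= sqrt (x + 1) - sqrt x); [|lra].
  apply Rmult_le_reg_r with (2 * x + 4); [lra|].
  rewrite Rinv_l by lra.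
  nra.
Qed.

Lemma Un_cv_dominated (u v : nat -> R) (l : R) :
  (forall n, Rabs (u n - l) <= v n) -> Un_cv v 0 -> Un_cv u l.
Proof.
  intros Hle Hv eps Heps.
  destruct (Hv eps Heps) as [N HN].
  exists N; intros n Hn.
  specialize (HN n Hn); unfold R_dist in *; rewrite Rminus_0_r in HN.
  eapply Rle_lt_trans; [apply Hle|].
  eapply Rle_lt_trans; [apply Rle_abs|exact HN].
Qed.

Lemma Un_cv_scal_sqrt_inv (k : R) :
  Un_cv (fun n => k * sqrt (/ (INR n + 1))) 0.
Proof.
  replace 0 with (k * sqrt 0) by (rewrite sqrt_0; ring).
  apply (continuity_seq (fun x => k * sqrt x)).
  - apply continuity_pt_scal, continuity_pt_sqrt; lra.
  - exact RinvN_cv.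
Qed.

Lemma ratio_le_sqrt_ratio_antitone (x y m : R) :
  0 < x -> 0 < m -> y / x <= sqrt ((m + 1) / m) ->
  y / sqrt (m + 1) <= x / sqrt m.
Proof.
  intros Hx Hm Hyx.
  rewrite sqrt_div_alt in Hyx by lra.
  assert (Hp : 0 < sqrt m) by (apply sqrt_lt_R0; lra).
  assert (Hq : 0 < sqrt (m + 1)) by (apply sqrt_lt_R0; lra).
  apply Rmult_le_reg_r with (sqrt m * sqrt (m + 1)); [nra|].
  apply (Rmult_le_compat_r (x * sqrt m)) in Hyx; [|nra].
  replace (y / x * (x * sqrt m)) with (y * sqrt m) in Hyx by (field; lra).
  replace (sqrt (m + 1) / sqrt m * (x * sqrt m)) with (x * sqrt (m + 1))
    in Hyx by (field; lra).
  replace (y / sqrt (m + 1) * (sqrt m * sqrt (m + 1))) with (y * sqrt m)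
    by (field; lra).
  replace (x / sqrt m * (sqrt m * sqrt (m + 1))) with (x * sqrt (m + 1))
    by (field; lra).
  exact Hyx.
Qed.

Definition lower_sq (m : R) : R := m + sqrt (m * (m + 1)).

Lemma inv_lower_sq (m : R) :
  0 < m -> / lower_sq m = (sqrt (m * (m + 1)) - m) / m.
Proof.
  intros Hm; unfold lower_sq; set (s := sqrt (m * (m + 1))).
  assert (Hs2 : s * s = m * (m + 1)) by (apply sqrt_sqrt; nra).
  assert (0 <= s) by apply sqrt_pos.
  field_simplify_eq; [nra|split; lra].
Qed.

Lemma one_add_inv_lower_sq (m : R) :
  0 < m -> 1 + / lower_sq m = sqrt ((m + 1) / m).
Proof.
  intros Hm; rewrite inv_lower_sq by lra.
  set (s := sqrt (m * (m + 1))).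
  assert (Hs2 : s * s = m * (m + 1)) by (apply sqrt_sqrt; nra).
  assert (0 <= s) by apply sqrt_pos.
  replace ((m + 1) / m) with ((s / m) * (s / m)) by (field_simplify_eq; nra).
  rewrite sqrt_square.
  - field; lra.
  - apply Rmult_le_pos; [lra|left; apply Rinv_0_lt_compat; lra].
Qed.

Lemma lower_sq_step (m : R) :
  0 < m -> lower_sq (m + 1) <= lower_sq m + 2 + / lower_sq m.
Proof.
  intros Hm; rewrite inv_lower_sq by lra; unfold lower_sq.
  set (s := sqrt (m * (m + 1))); set (t := sqrt ((m + 1) * (m + 1 + 1))).
  assert (Hs2 : s * s = m * (m + 1)) by (apply sqrt_sqrt; nra).
  assert (Ht2 : t * t = (m + 1) * (m + 1 + 1)) by (apply sqrt_sqrt; nra).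
  assert (0 <= s) by apply sqrt_pos; assert (0 <= t) by apply sqrt_pos.
  (* squared, [t m <= s (m+1)] is [m (m+2) <= (m+1)^2] *)
  assert (Htm : t * m <= s * (m + 1)).
  { apply Rsqr_incr_0_var; unfold Rsqr; [|nra].
    replace (t * m * (t * m)) with ((t * t) * (m * m)) by ring.
    replace (s * (m + 1) * (s * (m + 1))) with ((s * s) * ((m + 1) * (m + 1)))
      by ring.
    rewrite Hs2, Ht2; nra. }
  apply Rmult_le_reg_r with m; [lra|].
  replace ((m + s + 2 + (s - m) / m) * m) with (m * m + s * m + m + s)
    by (field; lra).
  nra.
Qed.

Lemma a0_ge_2 (n : nat) : 2 <= a0 n.
Proof.
  induction n as [|n IH]; simpl; [lra|].
  assert (0 < / a0 n) by (apply Rinv_0_lt_compat; lra).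
  lra.
Qed.

Definition a0sq (n : nat) : R := a0 n * a0 n.

Lemma a0sq_S (n : nat) : a0sq (S n) = a0sq n + 2 + / a0sq n.
Proof. unfold a0sq; simpl; pose proof (a0_ge_2 n); field; lra. Qed.

Lemma a0sq_lower (n : nat) : 2 * INR n + 4 <= a0sq n.
Proof.
  induction n as [|n IH]; [unfold a0sq; simpl; lra|].
  rewrite a0sq_S, S_INR.
  assert (0 < / a0sq n) by (apply Rinv_0_lt_compat; pose proof (pos_INR n); lra).
  lra.
Qed.

Lemma a0sq_upper (n : nat) : a0sq n <= 2 * INR n + 4 + sqrt (INR n).
Proof.
  induction n as [|n IH]; [unfold a0sq; simpl; rewrite sqrt_0; lra|].
  rewrite a0sq_S, S_INR.
  pose proof (a0sq_lower n); pose proof (pos_INR n).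
  pose proof (sqrt_succ_ge (INR n) ltac:(lra)).
  assert (/ a0sq n <= / (2 * INR n + 4)) by (apply Rinv_le_contravar; lra).
  lra.
Qed.

Lemma lower_sq_le_a0sq (k : nat) : lower_sq (INR (S k)) <= a0sq k.
Proof.
  induction k as [|k IH].
  - unfold lower_sq, a0sq; simpl.
    assert (sqrt (1 * (1 + 1)) <= 2).
    { rewrite <- (sqrt_square 2) by lra; apply sqrt_le_1; lra. }
    lra.
  - rewrite S_INR, a0sq_S.
    assert (Hm : 1 <= INR (S k)) by (rewrite S_INR; pose proof (pos_INR k); lra).
    assert (1 <= lower_sq (INR (S k))).
    { unfold lower_sq; pose proof (sqrt_pos (INR (S k) * (INR (S k) + 1))); lra. }
    eapply Rle_trans; [apply lower_sq_step; lra|].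
    pose proof (Rplus_inv_self_le _ _ ltac:(eassumption) IH).
    lra.
Qed.

Lemma a0sq_ratio_dist (n : nat) :
  Rabs (a0sq n / (INR n + 1) - 2) <= 3 * sqrt (/ (INR n + 1)).
Proof.
  pose proof (pos_INR n); pose proof (a0sq_lower n); pose proof (a0sq_upper n).
  rewrite sqrt_inv.
  set (q := sqrt (INR n + 1)).
  assert (Hq2 : q * q = INR n + 1) by (apply sqrt_sqrt; lra).
  assert (Hq : 1 <= q) by (rewrite <- sqrt_1; apply sqrt_le_1; lra).
  assert (sqrt (INR n) <= q) by (apply sqrt_le_1; lra).
  (* [0 <= a0sq n - 2(n+1) <= 2 + sqrt n <= 3 q], then divide by [q^2] *)
  replace (a0sq n / (INR n + 1) - 2) with ((a0sq n - 2 * (INR n + 1)) / (q * q))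
    by (rewrite Hq2; field; lra).
  rewrite Rabs_right by (apply Rle_ge, Rmult_le_pos; [lra|left; apply Rinv_0_lt_compat; nra]).
  apply Rmult_le_reg_r with (q * q); [nra|].
  replace ((a0sq n - 2 * (INR n + 1)) / (q * q) * (q * q))
    with (a0sq n - 2 * (INR n + 1)) by (field; lra).
  replace (3 * / q * (q * q)) with (3 * q) by (field; lra).
  nra.
Qed.

Lemma a_lower (m : nat) : (1 <= m)%nat -> sqrt (lower_sq (INR m)) <= a m.
Proof.
  intros Hm; destruct m as [|k]; [lia|].
  unfold a; simpl Nat.pred; pose proof (a0_ge_2 k).
  rewrite <- (sqrt_square (a0 k)) by lra.
  apply sqrt_le_1; [|nra|apply lower_sq_le_a0sq].
  unfold lower_sq; pose proof (sqrt_pos (INR (S k) * (INR (S k) + 1))).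
  pose proof (pos_INR (S k)); lra.
Qed.

Lemma a_ratio_le (m : nat) :
  (1 <= m)%nat -> a (S m) / a m <= sqrt ((INR m + 1) / INR m).
Proof.
  intros Hm; destruct m as [|k]; [lia|].
  unfold a; simpl Nat.pred.
  assert (HS : 1 <= INR (S k)) by (rewrite S_INR; pose proof (pos_INR k); lra).
  rewrite <- one_add_inv_lower_sq by lra.
  replace (a0 (S k) / a0 k) with (1 + / a0sq k)
    by (unfold a0sq; simpl; pose proof (a0_ge_2 k); field; lra).
  assert (/ a0sq k <= / lower_sq (INR (S k))); [|lra].
  apply Rinv_le_contravar; [|apply lower_sq_le_a0sq].
  unfold lower_sq; pose proof (sqrt_pos (INR (S k) * (INR (S k) + 1))); lra.
Qed.

Lemma a_div_sqrt_antitone (m : nat) :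
  (1 <= m)%nat -> a (S m) / sqrt (INR (S m)) <= a m / sqrt (INR m).
Proof.
  intros Hm; rewrite S_INR.
  apply ratio_le_sqrt_ratio_antitone; [|apply lt_0_INR; lia|apply a_ratio_le, Hm].
  destruct m as [|k]; [lia|].
  pose proof (a0_ge_2 k); unfold a; simpl Nat.pred; lra.
Qed.

Lemma a_div_sqrt_cv : Un_cv (fun n => a (S n) / sqrt (INR (S n))) (sqrt 2).
Proof.
  apply Un_cv_ext with (un := fun n => sqrt (a0sq n / (INR n + 1))).
  - intros n; pose proof (a0_ge_2 n); pose proof (pos_INR n).
    rewrite sqrt_div_alt, S_INR by lra.
    unfold a0sq, a; simpl Nat.pred; rewrite sqrt_square by lra; reflexivity.
  - apply (continuity_seq sqrt); [apply continuity_pt_sqrt; lra|].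
    apply Un_cv_dominated with (v := fun n => 3 * sqrt (/ (INR n + 1))).
    + exact a0sq_ratio_dist.
    + apply Un_cv_scal_sqrt_inv.
Qed.

Theorem mainTheorem11 :
  (forall m : nat, (1 <= m)%nat ->
     sqrt (INR m + sqrt (INR m * (INR m + 1))) <= a m) /\
  (forall m : nat, (1 <= m)%nat ->
     a (S m) / a m <= sqrt ((INR m + 1) / INR m)) /\
  (forall m : nat, (1 <= m)%nat ->
     a (S m) / sqrt (INR (S m)) <= a m / sqrt (INR m)) /\
  Un_cv (fun n : nat => a (S n) / sqrt (INR (S n))) (sqrt 2).
Proof.
  split; [exact a_lower|].
  split; [exact a_ratio_le|].
  split; [exact a_div_sqrt_antitone|].
  exact a_div_sqrt_cv.
Qed.
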